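(* Let $\mathbf{f}=\{f_1,\dots,f_m\}$ be a simple problem and $\mathbf{g}\subseteq\mathbf{f}$ a subproblem. Then for each $i\in\{1,\dots,m\}$, the restriction of the projection $\pi_{-i}:\mathbb{R}^m\to\mathbb{R}^m$, $(y_1,\dots,y_m)\mapsto(y_1,\dots,y_{i-1},0,y_{i+1},\dots,y_m)$, to $\operatorname{Int}\mathbf{f}X^*(\mathbf{g})$ is a topological embedding.
   Context: A problem is a finite set $\mathbf{f}=\{f_1,\dots,f_m\}$ of functions $f_i:\mathbb{R}^n\to\mathbb{R}$ together with a feasible region $X\subseteq\mathbb{R}^n$, to be minimized simultaneously; its evaluation map is $x\mapsto(f_1(x),\dots,f_m(x))$. A subproblem $\mathbf{g}\subseteq\mathbf{f}$ is a subset of these functions (including $\emptyset$ and $\mathbf{f}$), with the same $X$; its evaluation map is $x\mapsto(f_i(x))_{f_i\in\mathbf{g}}\in\mathbb{R}^{|\mathbf{g}|}$. The Pareto set $X^*(\mathbf{g})$ is the set of $x^*\in X$ for which there is no $x\in X$ with $f_i(x)\le f_i(x^* )$ for all $f_i\in\mathbf{g}$ and $f_j(x)<f_j(x^* )$ for some $f_j\in\mathbf{g}$; by convention $X^*(\emptyset)=\emptyset$. $\mathbf{f}X^*(\mathbf{g})$ denotes the image of $X^*(\mathbf{g})$ under the evaluation map of $\mathbf{f}$. A problem $\mathbf{f}$ is simple if every subproblem $\mathbf{g}\subseteq\mathbf{f}$ with $k=|\mathbf{g}|$ objectives satisfies: (S1) $X^*(\mathbf{g})$ is homeomorphic to $\Delta^{k-1}=\{t\in[0,1]^k:\sum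 t_i=1\}$ (with $\Delta^{-1}=\emptyset$); (S2) the evaluation map of $\mathbf{g}$ restricted to $X^*(\mathbf{g})$ is a topological embedding into $\mathbb{R}^k$. For a simple problem, each $\mathbf{f}X^*(\mathbf{g})$ is homeomorphic to $\Delta^{|\mathbf{g}|-1}$, hence a topological manifold with boundary; $\operatorname{Int}$ and $\partial$ denote its manifold interior and manifold boundary (for a single point, the interior is the point and the boundary is empty). All sets carry the subspace topology from Euclidean space. *)

From Stdlib Require Import Reals.
From mathcomp Require Import all_boot.
Unset Printing Implicit Defensive.

Local Open Scope R_scope.

Definition Rn (a : nat) := 'I_a -> R.

(* Open sup-norm ball relation: the sup-metric induces the Euclidean topology. *)
Definition near {a : nat} (x y : Rn a) (d : R) : Prop :=
  forall j : 'I_a, Rabs (x j - y j) < d.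

Definition embedding_on {a b : nat} (h : Rn a -> Rn b) (S : Rn a -> Prop) : Prop :=
  (forall x y, S x -> S y -> h x = h y -> x = y) /\
  (forall x, S x -> forall eps, 0 < eps -> exists del, 0 < del /\
     forall y, S y -> near x y del -> near (h x) (h y) eps) /\
  (forall x, S x -> forall eps, 0 < eps -> exists del, 0 < del /\
     forall y, S y -> near (h x) (h y) del -> near x y eps).

Definition homeomorphic {a b : nat} (S : Rn a -> Prop) (V : Rn b -> Prop) : Prop :=
  exists h : Rn a -> Rn b, embedding_on h S /\
    (forall x, S x -> V (h x)) /\ (forall y, V y -> exists x, S x /\ h x = y).

Definition open_set_Rn {a : nat} (U : Rn a -> Prop) : Prop :=
  forall x, U x -> exists eps, 0 < eps /\ forall y, near x y eps -> U y.

Definition rel_open {a : nat} (M U : Rn a -> Prop) : Prop :=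
  (forall x, U x -> M x) /\
  forall x, U x -> exists eps, 0 < eps /\ forall y, M y -> near x y eps -> U y.

(* Manifold interior of a d-dimensional topological manifold (with boundary)
   M : points having an open neighbourhood in M homeomorphic to an open
   subset of R^d. *)
Definition manifold_interior {a : nat} (d : nat) (M : Rn a -> Prop) (p : Rn a) : Prop :=
  M p /\ exists U : Rn a -> Prop, rel_open M U /\ U p /\
    exists V : Rn d -> Prop, open_set_Rn V /\ homeomorphic U V.

(* Standard simplex Delta^{k-1} in R^k (empty for k = 0). *)
Definition simplex (k : nat) : Rn k -> Prop :=
  fun t => (forall j, 0 <= t j <= 1) /\ \big[Rplus/0]_(j < k) t j = 1.

(* A problem with m objectives f i : R^n -> R on the feasible region X;
   a subproblem is a set g of objective indices. *)

(* Pareto set X*(g), with X*(emptyset) = emptyset. *)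
Definition pareto {n m : nat} (f : 'I_m -> Rn n -> R) (X : Rn n -> Prop)
  (g : {set 'I_m}) : Rn n -> Prop :=
  fun xs => g != set0 /\ X xs /\
    ~ (exists x, X x /\ (forall i, i \in g -> f i x <= f i xs) /\
                 (exists j, j \in g /\ f j x < f j xs)).

Definition eval_sub {n m : nat} (f : 'I_m -> Rn n -> R) (g : {set 'I_m})
  : Rn n -> Rn #|g| :=
  fun x j => f (enum_val j) x.

Definition eval_all {n m : nat} (f : 'I_m -> Rn n -> R) : Rn n -> Rn m :=
  fun x i => f i x.

Definition image_pareto {n m : nat} (f : 'I_m -> Rn n -> R) (X : Rn n -> Prop)
  (g : {set 'I_m}) : Rn m -> Prop :=
  fun y => exists x, pareto f X g x /\ eval_all f x = y.

Definition simple_problem {n m : nat} (f : 'I_m -> Rn n -> R) (X : Rn n -> Prop) : Prop :=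
  forall g : {set 'I_m},
    homeomorphic (pareto f X g) (simplex #|g|) /\
    embedding_on (eval_sub f g) (pareto f X g).

Definition proj_minus {m : nat} (i : 'I_m) (y : Rn m) : Rn m :=
  fun j => if j == i then 0 else y j.

(* Simplicity gives injectivity: if two Pareto points of g have images agreeing
   off the i-th coordinate, then a strict difference in f_i would make one
   dominate the other, so they agree on all of g and coincide by (S2).
   Continuity of the inverse is compactness: X*(g) is homeomorphic to a simplex,
   hence (sequentially) compact, so is its image f X*(g), and a continuous
   injection of a compact set is an embedding.  The argument gives the
   embedding on all of f X*(g), of which the manifold interior is a subset. *)

From Pilot Require Import Defs.
From mathcomp Require Import all_boot all_order all_algebra.
From mathcomp Require Import all_classical all_reals all_analysis.
From mathcomp Require Import Rstruct Rstruct_topology.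
From Stdlib Require Import Reals Lra.

Set Implicit Arguments.
Unset Strict Implicit.

Local Open Scope R_scope.

Definition continuous_on {a b : nat} (h : Rn a -> Rn b) (S : Rn a -> Prop) : Prop :=
  forall x, S x -> forall eps, 0 < eps -> exists del, 0 < del /\
    forall y, S y -> Defs.near x y del -> Defs.near (h x) (h y) eps.

Definition injective_on {a b : nat} (h : Rn a -> Rn b) (S : Rn a -> Prop) : Prop :=
  forall x y, S x -> S y -> h x = h y -> x = y.

Definition converges {a : nat} (u : nat -> Rn a) (y : Rn a) : Prop :=
  forall e, 0 < e -> exists N, forall k, (N <= k)%nat -> Defs.near y (u k) e.

Definition cluster_point {a : nat} (u : nat -> Rn a) (p : Rn a) : Prop :=
  forall del N, 0 < del -> exists k : nat, (N <= k)%nat /\ Defs.near p (u k) del.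

Definition seq_compact {a : nat} (S : Rn a -> Prop) : Prop :=
  forall u, (forall k, S (u k)) -> exists p, S p /\ cluster_point u p.

Module UnitCube.
Import Order.TTheory GRing.Theory Num.Theory.
Import numFieldNormedType.Exports.
Local Open Scope classical_set_scope.
Local Open Scope ring_scope.

Lemma unit_cube_seq_compact (d : nat) :
  seq_compact (fun t : Rn d => forall j, Rle 0 (t j) /\ Rle (t j) 1).
Proof.
move=> t t01.
have cube_compact := @rV_compact R d (fun _ => `[0:R, 1]%classic)
  (fun _ => @segment_compact R 0 1).
have [v [v01 v_cluster]] :
    [set v : 'rV[R]_d | forall j, `[0:R, 1]%classic (v ord0 j)]
      `&` cluster ((fun k => \row_j t k j) @ \oo) !=set0.
  apply: cube_compact; exists O => // k _ j /=.
  have [? ?] := t01 k j; rewrite mxE in_itv /=; apply/andP; split; exact/RleP.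
exists (fun j => v ord0 j); split.
  by move=> j; move: (v01 j); rewrite /= in_itv /= => /andP[/RleP ? /RleP ?].
move=> del N del_gt0.
have [] := v_cluster [set w | exists k : nat, (N <= k)%nat /\ w = \row_j t k j] (ball v del).
- by exists N => // k Nk /=; exists k.
- by apply: nbhsx_ballx; apply/RltP.
move=> w [[k [Nk ->]] w_ball]; exists k; split => // j.
by move: (w_ball.2 ord0 j); rewrite /ball /= mxE RabsE => /RltP.
Qed.

End UnitCube.

Lemma Rabs_lt_all_eq0 z : (forall e, 0 < e -> Rabs z < e) -> z = 0.
Proof.
move=> small; case: (Req_dec z 0) => // z_neq0.
have := small _ (Rabs_pos_lt z z_neq0); lra.
Qed.

Lemma Rabs_sum_sub_le k (a b : 'I_k -> R) del :
  (forall j, Rabs (a j - b j) < del) ->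
  Rabs (\big[Rplus/0]_(j < k) a j - \big[Rplus/0]_(j < k) b j) <= INR k * del.
Proof.
elim: k a b => [|k IH] a b ab_close.
  by rewrite !big_ord0 /= Rminus_0_r Rabs_R0; lra.
rewrite !big_ord_recr S_INR /=.
have := IH (fun j => a (widen_ord (leqnSn k) j)) (fun j => b (widen_ord (leqnSn k) j))
  (fun j => ab_close _).
have := ab_close ord_max.
set A := \big[Rplus/0]_(j < k) _; set B := \big[Rplus/0]_(j < k) _ => h1 h2.
have := Rabs_triang (A - B) (a ord_max - b ord_max).
by replace (A - B + (a ord_max - b ord_max)) with (A + a ord_max - (B + b ord_max))
  by ring; lra.
Qed.

Section Sequences.
Context {a : nat}.

Lemma near_sym (x y : Rn a) e : Defs.near x y e -> Defs.near y x e.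
Proof. by move=> xy j; rewrite Rabs_minus_sym. Qed.

Lemma near_trans (x y z : Rn a) e1 e2 :
  Defs.near x y e1 -> Defs.near y z e2 -> Defs.near x z (e1 + e2).
Proof.
move=> xy yz j; have /Rabs_def2 [? ?] := xy j; have /Rabs_def2 [? ?] := yz j.
apply: Rabs_def1; lra.
Qed.

Lemma near_all_eq (x y : Rn a) : (forall e, 0 < e -> Defs.near x y e) -> x = y.
Proof.
move=> close; apply: funext => j; apply: Rminus_diag_uniq.
by apply: Rabs_lt_all_eq0 => e e_gt0; exact: close.
Qed.

Lemma converges_inv_succ (u : nat -> Rn a) y :
  (forall k, Defs.near y (u k) (/ (INR k + 1))) -> converges u y.
Proof.
move=> u_close e e_gt0; have [N [invN_lt N_gt0]] := archimed_cor1 e e_gt0.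
exists N => k Nk j; apply: Rlt_le_trans (u_close k j) _.
have N_le_k := le_INR N k (elimT leP Nk).
suff : / (INR k + 1) <= / INR N by lra.
apply: Rinv_le_contravar; [exact: lt_0_INR | lra].
Qed.

Lemma converges_cluster_point_eq (u : nat -> Rn a) y p :
  converges u y -> cluster_point u p -> p = y.
Proof.
move=> u_y p_cl; apply: near_all_eq => e e_gt0.
have [N u_close] := u_y (e / 2) ltac:(lra).
have [k [Nk p_close]] := p_cl (e / 2) N ltac:(lra).
have := near_trans p_close (near_sym (u_close k Nk)).
by replace (e / 2 + e / 2) with e by field.
Qed.

End Sequences.

Section Maps.
Context {a b : nat}.

Lemma cluster_point_continuous (h : Rn a -> Rn b) S u p :
  continuous_on h S -> (forall k, S (u k)) -> S p -> cluster_point u p ->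
  cluster_point (fun k => h (u k)) (h p).
Proof.
move=> h_cont Su Sp p_cl eps N eps_gt0.
have [del [del_gt0 h_close]] := h_cont p Sp eps eps_gt0.
have [k [Nk p_close]] := p_cl del N del_gt0.
by exists k; split => //; exact: h_close.
Qed.

Lemma seq_compact_image (h : Rn a -> Rn b) S :
  seq_compact S -> continuous_on h S ->
  seq_compact (fun y => exists x, S x /\ h x = y).
Proof.
move=> S_cpt h_cont v v_img.
have [u u_pre] := choice v_img.
have [p [Sp p_cl]] := S_cpt u (fun k => proj1 (u_pre k)).
exists (h p); split; first by exists p.
have := cluster_point_continuous h_cont (fun k => proj1 (u_pre k)) Sp p_cl.
by under eq_fun => k do rewrite (proj2 (u_pre k)).
Qed.

Lemma inverse_continuous_on_seq_compact (h : Rn a -> Rn b) S :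
  seq_compact S -> continuous_on h S -> injective_on h S ->
  forall x, S x -> forall eps, 0 < eps -> exists del, 0 < del /\
    forall y, S y -> Defs.near (h x) (h y) del -> Defs.near x y eps.
Proof.
move=> S_cpt h_cont h_inj x Sx eps eps_gt0.
apply: contrapT => no_del.
have bad k : exists y, S y /\ Defs.near (h x) (h y) (/ (INR k + 1)) /\
    ~ Defs.near x y eps.
  apply: contrapT => no_y; apply: no_del; exists (/ (INR k + 1)); split.
    by apply: Rinv_0_lt_compat; have := pos_INR k; lra.
  move=> y Sy hxy; apply: contrapT => not_xy; apply: no_y; exists y; tauto.
have [u u_bad] := choice bad.
have Su k := proj1 (u_bad k).
have [p [Sp p_cl]] := S_cpt u Su.
have hu_hx : converges (fun k => h (u k)) (h x).
  by apply: converges_inv_succ => k; exact: (proj1 (proj2 (u_bad k))).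
have hp_hx := converges_cluster_point_eq hu_hx (cluster_point_continuous h_cont Su Sp p_cl).
have p_x := h_inj _ _ Sp Sx hp_hx; subst p.
have [k [_ x_close]] := p_cl eps O eps_gt0.
exact: (proj2 (proj2 (u_bad k)) x_close).
Qed.

Lemma embedding_on_seq_compact (h : Rn a -> Rn b) S :
  seq_compact S -> continuous_on h S -> injective_on h S -> embedding_on h S.
Proof.
move=> S_cpt h_cont h_inj; split; [exact: h_inj | split; first exact: h_cont].
exact: inverse_continuous_on_seq_compact.
Qed.

Lemma seq_compact_homeomorphic (S : Rn a -> Prop) (V : Rn b -> Prop) :
  homeomorphic S V -> seq_compact V -> seq_compact S.
Proof.
move=> [h [[_ [_ hinv_cont]] [hSV hVS]]] V_cpt u Su.
have [q [Vq q_cl]] := V_cpt (fun k => h (u k)) (fun k => hSV _ (Su k)).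
have [p [Sp hp_q]] := hVS q Vq; subst q.
exists p; split => // eps N eps_gt0.
have [del [del_gt0 p_close]] := hinv_cont p Sp eps eps_gt0.
have [k [Nk hp_close]] := q_cl del N del_gt0.
by exists k; split => //; exact: p_close.
Qed.

Lemma embedding_on_subset (h : Rn a -> Rn b) (S T : Rn a -> Prop) :
  (forall x, T x -> S x) -> embedding_on h S -> embedding_on h T.
Proof.
move=> TS [h_inj [h_cont hinv_cont]]; split; [|split].
- by move=> x y Tx Ty; apply: h_inj; exact: TS.
- move=> x Tx eps eps_gt0; have [del [del_gt0 close]] := h_cont x (TS x Tx) eps eps_gt0.
  by exists del; split => // y Ty; apply: close; exact: TS.
- move=> x Tx eps eps_gt0; have [del [del_gt0 close]] := hinv_cont x (TS x Tx) eps eps_gt0.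
  by exists del; split => // y Ty; apply: close; exact: TS.
Qed.

End Maps.

Lemma simplex_seq_compact k : seq_compact (simplex k).
Proof.
move=> t t_simplex.
have [p [p01 p_cl]] := UnitCube.unit_cube_seq_compact (fun l => proj1 (t_simplex l)).
have p_sum : \big[Rplus/0]_(j < k) p j = 1.
  apply: Rminus_diag_uniq; apply: Rabs_lt_all_eq0 => e e_gt0.
  have k_ge0 := pos_INR k.
  have del_gt0 : 0 < e / (INR k + 1) by apply: Rdiv_lt_0_compat; lra.
  have [l [_ tl_close]] := p_cl _ O del_gt0.
  have := Rabs_sum_sub_le tl_close; rewrite (proj2 (t_simplex l)).
  have -> : INR k * (e / (INR k + 1)) = e - e / (INR k + 1) by field; lra.
  lra.
by exists p.
Qed.

Section SimpleProblem.
Variables (n m : nat) (f : 'I_m -> Rn n -> R) (X : Rn n -> Prop).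
Hypothesis f_simple : simple_problem f X.

Lemma pareto_inj (g : {set 'I_m}) x x' : pareto f X g x -> pareto f X g x' ->
  (forall k, k \in g -> f k x = f k x') -> x = x'.
Proof.
move=> Sx Sx' fxx'; apply: (proj1 (proj2 (f_simple g))) => //.
by apply: funext => j; apply: fxx'; exact: enum_valP.
Qed.

Lemma pareto_of_eq_on (g : {set 'I_m}) x x' : pareto f X g x -> X x' ->
  (forall k, k \in g -> f k x' = f k x) -> pareto f X g x'.
Proof.
move=> [g_neq0 [Xx undominated]] Xx' fx'x; do !split => //.
move=> [z [Xz [z_le [j [jg z_lt]]]]]; apply: undominated; exists z.
by do !split => //; [move=> k kg; rewrite -fx'x; auto | exists j; rewrite -fx'x].
Qed.

(* Uses (S2): a point dominating x for f while tying with it on g would be a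
   second Pareto point of g with the same g-values. *)
Lemma pareto_subset_setT (g : {set 'I_m}) x :
  pareto f X g x -> pareto f X [set: 'I_m] x.
Proof.
move=> Sx; have [g_neq0 [Xx undominated]] := Sx.
split; first by apply/set0Pn; case/set0Pn: g_neq0 => k _; exists k; rewrite finset.in_setT.
split => // -[x' [Xx' [x'_le [j [_ x'_lt]]]]].
have x'_le_g k : f k x' <= f k x := x'_le k (finset.in_setT k).
case: (pselect (exists k, k \in g /\ f k x' < f k x)) => [lt_g | no_lt_g].
  by apply: undominated; exists x'.
have x'_eq_g k : k \in g -> f k x' = f k x.
  move=> kg; case: (Rle_lt_or_eq_dec _ _ (x'_le_g k)) => // lt.
  by case: no_lt_g; exists k.
have x'_x := pareto_inj (pareto_of_eq_on Sx Xx' x'_eq_g) Sx x'_eq_g; subst x'; lra.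
Qed.

Lemma eval_all_continuous_on_pareto (g : {set 'I_m}) :
  continuous_on (eval_all f) (pareto f X g).
Proof.
move=> x Sx eps eps_gt0.
have [_ [_ [eval_cont _]]] := f_simple [set: 'I_m].
have [del [del_gt0 close]] := eval_cont x (pareto_subset_setT Sx) eps eps_gt0.
exists del; split => // y Sy xy k.
have := close y (pareto_subset_setT Sy) xy (enum_rank_in (finset.in_setT k) k).
by rewrite /eval_sub enum_rankK_in ?finset.in_setT.
Qed.

Lemma seq_compact_image_pareto (g : {set 'I_m}) :
  seq_compact (image_pareto f X g).
Proof.
apply: seq_compact_image _ (@eval_all_continuous_on_pareto g).
exact: seq_compact_homeomorphic (proj1 (f_simple g)) (@simplex_seq_compact _).
Qed.

Lemma proj_minus_injective_on_image_pareto (g : {set 'I_m}) (i : 'I_m) :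
  injective_on (proj_minus i) (image_pareto f X g).
Proof.
move=> _ _ [x [Sx <-]] [x' [Sx' <-]] proj_eq.
have off_i k : k != i -> f k x = f k x'.
  by move=> ki; have := f_equal (fun y => y k) proj_eq; rewrite /proj_minus (negbTE ki).
have dominated y y' : pareto f X g y' -> X y ->
    (forall k, k != i -> f k y = f k y') -> i \in g -> ~ f i y < f i y'.
  move=> [_ [_ undominated]] Xy same ig lt; apply: undominated.
  exists y; split => //; split; last by exists i.
  by move=> k _; case: (eqVneq k i) => [->|ki]; [lra | rewrite same //; lra].
have on_g k : k \in g -> f k x = f k x'.
  case: (eqVneq k i) => [-> ig | ki _]; last exact: off_i.
  have [Xx Xx'] := (proj1 (proj2 Sx), proj1 (proj2 Sx')).
  have := dominated x x' Sx' Xx off_i ig.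
  have := dominated x' x Sx Xx' (fun k ki => esym (off_i k ki)) ig; lra.
by rewrite (pareto_inj Sx Sx' on_g).
Qed.

End SimpleProblem.

Lemma proj_minus_continuous_on m (i : 'I_m) S : continuous_on (proj_minus i) S.
Proof.
move=> y _ eps eps_gt0; exists eps; split => // y' _ close j.
rewrite /proj_minus; case: (j == i); last exact: close.
by rewrite Rminus_0_r Rabs_R0.
Qed.

Unset Implicit Arguments.

Theorem corollary1 (n m : nat) (f : 'I_m -> Rn n -> R) (X : Rn n -> Prop)
  (Hsimple : simple_problem f X) (g : {set 'I_m}) (i : 'I_m) :
  embedding_on (proj_minus i)
    (manifold_interior (#|g|.-1) (image_pareto f X g)).
Proof.
apply: (@embedding_on_subset _ _ _ (image_pareto f X g)); first by move=> y [].
apply: embedding_on_seq_compact.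
- exact: seq_compact_image_pareto.
- exact: proj_minus_continuous_on.
- exact: proj_minus_injective_on_image_pareto.
Qed.
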